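(* In the setting below, for every $a\in A$ the map $f_a:X\to T_a$ is roughly Lipschitz: there are constants $\Lambda>0$, $\sigma\ge0$ such that $|f_a(x)f_a(x')|\le\Lambda|xx'|+\sigma$ for all $x,x'\in X$.
   Context: Setting: $Z$ is a bounded metric space with $\operatorname{diam}Z>0$, $\mu=\pi/\operatorname{diam}Z$, $A$ a set with $|A|=n+1$, and $\delta,\gamma\in(0,1)$, $\lambda\ge1$, $r\in(0,1)$ sufficiently small with $\lambda r<\delta$, $r<\operatorname{diam}Z$. $(\mathcal U_j)_{j\in\mathbb N}$ is a $\gamma$-separated characteristic sequence of open coverings of $Z$, each colored by $A$, $\mathcal U_j=\bigcup_{a\in A}\mathcal U_j^a$, with parameter $r$ and characteristic constants $\delta,\lambda$; that is: each $\mathcal U_j^a$ consists of pairwise disjoint open sets; (1) $\sup_{U\in\mathcal U_j}\operatorname{diam}U\le r^j$ and every ball of radius $\delta r^j$ in $Z$ is contained in some member of $\mathcal U_j$; (2) for every $a,j$ and $z\in Z$ there is $U\in\mathcal U_j^a$ with $\operatorname{dist}(z,U)\le\lambda r^j$; (3) for every $a$ and distinct $U\in\mathcal U_j^a$, $U'\in\mathcal U_{j'}^a$ with $j'\le j$, either $B_s(U)\cap U'=\emptyset$ or $B_s(U)\subset U'$, and if $j'<j$ there is $U''\in\mathcal U_j^a$ with $B_s(U'')\subset U'$, where $s=\gamma r^j$ and $B_s(U)=\{z:\operatorname{dist}(z,U)<s\}$. Trees: put $\mathcal U_0^a=\{Z\}$. $T_a$ is the tree (edges of length $1$, path metric) with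 vertex set $V^a=\bigsqcup_{j\ge0}V_j^a$, where $V_j^a$ is in bijection with $\mathcal U_j^a$ (root $v_a$ corresponds to $Z$); $v\in V_j^a$, $v'\in V_{j'}^a$, $j'<j$, are joined by an edge iff the corresponding sets satisfy $U\subset U'$ and $j'$ is the maximal level $<j$ for which some member of $\mathcal U_{j'}^a$ contains $U$. Cone: $\operatorname{Co}(Z)=Z\times[0,\infty)/Z\times\{0\}$ with vertex $o$ and metric $|xx'|$ for $x=(z,t),x'=(z',t')$ equal to the length of the side $\bar x\bar x'$ of a triangle in $\mathrm H^2$ with sides $t,t'$ from $\bar o$ enclosing angle $\mu|zz'|$. Let $R=\ln(1/r)$, $Z_j=\{(z,jR):z\in Z\}$ for $j\ge1$, $Z_0=\{o\}$, $X=\bigcup_{j\ge0}Z_j$. Define $f_a:X\to T_a$ by $f_a(o)=v_a$ and, for $x=(z,jR)$, $j\ge1$, $f_a(x)$ is the vertex of $V_j^a$ corresponding to a (fixed choice of) member $U\in\mathcal U_j^a$ closest to $z$, i.e. minimizing $\operatorname{dist}(z,U)$. *)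

From Stdlib Require Import Reals Lra List.
Open Scope R_scope.

Section Setting.
Variables (Z : Type) (d : Z -> Z -> R).

Definition is_metric : Prop :=
  (forall x y, d x y = 0 <-> x = y) /\
  (forall x y, d x y = d y x) /\
  (forall x y w, d x w <= d x y + d y w).

Definition bounded_metric : Prop := exists M, forall x y, d x y <= M.

Definition is_diam (D : R) : Prop := is_lub (fun t => exists x y, t = d x y) D.

Definition same_set (U V : Z -> Prop) : Prop := forall z, U z <-> V z.
Definition subset (U V : Z -> Prop) : Prop := forall z, U z -> V z.
Definition ball (z : Z) (e : R) : Z -> Prop := fun y => d z y < e.
Definition is_open (U : Z -> Prop) : Prop :=
  forall z, U z -> exists e, 0 < e /\ subset (ball z e) U.

Definition nbhd (s : R) (U : Z -> Prop) : Z -> Prop :=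
  fun z => exists u, U u /\ d z u < s.

(* dist(z,U) <= c, with dist(z,U) = inf_{u in U} d z u (inf of empty set = +oo) *)
Definition dist_le (z : Z) (U : Z -> Prop) (c : R) : Prop :=
  forall e, 0 < e -> exists u, U u /\ d z u < c + e.

Definition dist_le_dist (z : Z) (U V : Z -> Prop) : Prop :=
  forall v, V v -> forall e, 0 < e -> exists u, U u /\ d z u < d z v + e.

Definition diam_le (U : Z -> Prop) (c : R) : Prop :=
  forall u v, U u -> U v -> d u v <= c.

Variables (A : Type).

(* cov a j : the family U_j^a (meaningful for j >= 1) *)
Definition colored_cover_family (cov : A -> nat -> (Z -> Prop) -> Prop) : Prop :=
  forall a j, (1 <= j)%nat ->
    (forall U, cov a j U -> is_open U) /\
    (forall U V, cov a j U -> cov a j V -> (exists z, U z /\ V z) -> same_set U V).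

Definition characteristic_sequence (cov : A -> nat -> (Z -> Prop) -> Prop)
  (r delta lam gamma : R) : Prop :=
  colored_cover_family cov /\
  (forall j a U, (1 <= j)%nat -> cov a j U -> diam_le U (r ^ j)) /\
  (forall j z, (1 <= j)%nat ->
     exists a U, cov a j U /\ subset (ball z (delta * r ^ j)) U) /\
  (forall a j z, (1 <= j)%nat ->
     exists U, cov a j U /\ dist_le z U (lam * r ^ j)) /\
  (forall a j j' U U', (1 <= j')%nat -> (j' <= j)%nat ->
     cov a j U -> cov a j' U' -> ~ same_set U U' ->
     (forall z, ~ (nbhd (gamma * r ^ j) U z /\ U' z)) \/
     subset (nbhd (gamma * r ^ j) U) U') /\
  (forall a j j' U', (1 <= j')%nat -> (j' < j)%nat -> cov a j' U' ->
     exists U'', cov a j U'' /\ subset (nbhd (gamma * r ^ j) U'') U').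

Definition fam (cov : A -> nat -> (Z -> Prop) -> Prop) (a : A) (j : nat)
  (U : Z -> Prop) : Prop :=
  match j with
  | O => forall z, U z
  | S _ => cov a j U
  end.

(* vertices of T_a: a level j together with a member of U_j^a *)
Definition vertex : Type := (nat * (Z -> Prop))%type.

Definition same_vertex (v w : vertex) : Prop :=
  fst v = fst w /\ same_set (snd v) (snd w).

Definition child (cov : A -> nat -> (Z -> Prop) -> Prop) (a : A) (v w : vertex) : Prop :=
  let (j, U) := v in let (j', U') := w in
  (j' < j)%nat /\ fam cov a j U /\ fam cov a j' U' /\ subset U U' /\
  (forall k, (j' < k)%nat -> (k < j)%nat ->
     ~ exists W, fam cov a k W /\ subset U W).

Definition adj cov a (v w : vertex) : Prop := child cov a v w \/ child cov a w v.

Inductive tree_walk cov a : vertex -> vertex -> nat -> Prop :=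
| tw0 : forall v w, same_vertex v w -> tree_walk cov a v w 0
| twS : forall v u w n, adj cov a v u -> tree_walk cov a u w n ->
          tree_walk cov a v w (S n).

End Setting.

Definition acosh (y : R) : R := ln (y + sqrt (y * y - 1)).

(* distance in Co(Z) between (z,t) and (z',t'): third side of a hyperbolic
   triangle with sides t,t' enclosing angle mu*|zz'| (hyperbolic law of cosines) *)
Definition cone_dist {Z : Type} (d : Z -> Z -> R) (mu : R)
  (z : Z) (t : R) (z' : Z) (t' : R) : R :=
  acosh (cosh t * cosh t' - sinh t * sinh t' * cos (mu * d z z')).

(* the point of X encoded by (z,j): (z, jR) for j >= 1, and o for j = 0 *)
Definition X_dist {Z : Type} (d : Z -> Z -> R) (D r : R) (z : Z) (j : nat)
  (z' : Z) (j' : nat) : R :=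
  cone_dist d (PI / D) z (INR j * ln (1 / r)) z' (INR j' * ln (1 / r)).

Definition f_vertex {Z A : Type} (choice : A -> nat -> Z -> (Z -> Prop))
  (a : A) (z : Z) (j : nat) : vertex Z :=
  match j with
  | O => (O, fun _ => True)
  | S _ => (j, choice a j z)
  end.

From Stdlib Require Import Reals List Lra Lia Arith Wf_nat Classical.
Open Scope R_scope.

(* A point x = (z, jR) of X is sent to a member U of the j-th covering, and tree distances
   are counted in levels.  If the deepest common ancestor of the images of x and x' lies
   strictly above both, let T be the first level with
   gamma r^T <= (lam + 1)(r^j + r^j') + |zz'|.  Walking up from U meets at most one
   ancestor at a level smaller than T: if C1 inside C2 are ancestors at levels l1 > l2 below the
   branch point, some point of U' lies outside C2, hence at distance >= gamma r^l1 from U by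
   the separation property (3); as U' lies within (lam + 1)(r^j + r^j') + |zz'| of U, this
   forces T <= l1.  So the tree distance is at most
   (j - T) + (j' - T) + 4.  On the cone side the hyperbolic law of cosines gives
   |xx'| >= |j - j'| R - ln 2, and |xx'| >= (j + j') R + 2 ln |zz'| - O(1) once |zz'| is not
   small compared with r^min(j,j'); in both regimes (j - T) + (j' - T) <= |xx'| / R + O(1).
   If some covering has an empty member, every deeper level has one, which is a child of
   every vertex one level up, and the tree distance is |j - j'| + O(1). *)

(** * Estimates for the cone metric *)

Lemma ln_le x y : 0 < x -> x <= y -> ln x <= ln y.
Proof.
  intros Hx Hxy; destruct (Rle_lt_or_eq_dec _ _ Hxy) as [H|<-]; [|lra].
  left; apply ln_increasing; lra.
Qed.

Lemma ln_le_acosh y : 1 <= y -> ln y <= acosh y.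
Proof.
  intro Hy; unfold acosh; apply ln_le; [lra|].
  pose proof (sqrt_pos (y * y - 1)); lra.
Qed.

Lemma sin_lb_expand x : sin_lb x = x - x ^ 3 / 6 + x ^ 5 / 120 - x ^ 7 / 5040.
Proof.
  unfold sin_lb, sin_approx, sin_term; simpl sum_f_R0.
  replace (INR (Factorial.fact (2 * 0 + 1))) with 1 by (simpl; lra).
  replace (INR (Factorial.fact (2 * 1 + 1))) with 6 by (simpl; lra).
  replace (INR (Factorial.fact (2 * 2 + 1))) with 120 by (simpl; lra).
  replace (INR (Factorial.fact (2 * 3 + 1))) with 5040
    by (rewrite INR_IZR_INZ; simpl; lra).
  simpl; field.
Qed.

(* Half-angle formula and [x / 3 <= sin x] for [0 <= x <= 2]. *)
Lemma one_sub_cos_ge th : 0 <= th <= PI -> th * th / 18 <= 1 - cos th.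
Proof.
  intros [H0 H1]; pose proof PI_4.
  set (x := th / 2).
  assert (Hx : 0 <= x <= 2) by (unfold x; lra).
  destruct (SIN x ltac:(lra) ltac:(unfold x; lra)) as [Hsin _].
  rewrite sin_lb_expand in Hsin.
  assert (Hsin3 : x / 3 <= sin x).
  { assert (Hpoly : 0 <= (2/3 - x * x / 6) + x * x * (x * x) * (1/120 - x * x / 5040)).
    { assert (0 <= x * x * (x * x) * (1/120 - x * x / 5040)); [|nra].
      apply Rmult_le_pos; nra. }
    assert (x - x ^ 3 / 6 + x ^ 5 / 120 - x ^ 7 / 5040 - x / 3 =
            x * ((2/3 - x * x / 6) + x * x * (x * x) * (1/120 - x * x / 5040)))
      by field.
    nra. }
  replace th with (2 * x) by (unfold x; field).
  rewrite cos_2a_sin; nra.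
Qed.

Lemma cosh_ge_1 x : 1 <= cosh x.
Proof.
  unfold cosh; rewrite exp_Ropp; set (u := exp x).
  assert (Hu : 0 < u) by apply exp_pos.
  assert (Hsq : u * (u + / u - 2) = (u - 1) * (u - 1)) by (field; lra).
  pose proof (Rle_0_sqr (u - 1)); unfold Rsqr in *.
  destruct (Rle_or_lt 0 (u + / u - 2)) as [|Hneg]; [lra|].
  pose proof (Rmult_lt_0_compat u (- (u + / u - 2)) Hu ltac:(lra)); lra.
Qed.

Lemma exp_abs_le_2_cosh x : exp (Rabs x) <= 2 * cosh x.
Proof.
  unfold cosh; pose proof (exp_pos x); pose proof (exp_pos (- x)).
  unfold Rabs; destruct (Rcase_abs x); lra.
Qed.

Lemma sinh_nonneg t : 0 <= t -> 0 <= sinh t.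
Proof.
  intro Ht; unfold sinh.
  assert (exp (- t) <= exp t); [|lra].
  destruct (Rle_lt_or_eq_dec _ _ Ht) as [H|<-].
  - left; apply exp_increasing; lra.
  - rewrite Ropp_0; lra.
Qed.

Lemma exp_mul_le_2_sinh t r :
  0 < r < 1 -> 1 <= exp t * r -> exp t * (1 - r * r) <= 2 * sinh t.
Proof.
  intros Hr Ht; unfold sinh; rewrite exp_Ropp; pose proof (exp_pos t).
  assert (/ exp t <= exp t * r * r); [|lra].
  apply (Rmult_le_reg_l (exp t)); [lra|]; rewrite Rinv_r by lra; nra.
Qed.

Lemma cosh_mul_sub_sinh_mul t t' c :
  cosh t * cosh t' - sinh t * sinh t' * c = cosh (t - t') + sinh t * sinh t' * (1 - c).
Proof.
  unfold cosh, sinh.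
  replace (- (t - t')) with (t' + - t) by ring; unfold Rminus.
  rewrite !exp_plus, !exp_Ropp.
  pose proof (exp_pos t); pose proof (exp_pos t'); field; lra.
Qed.

Lemma cosh_sub_le_cone_arg t t' c :
  0 <= t -> 0 <= t' -> c <= 1 ->
  cosh (t - t') <= cosh t * cosh t' - sinh t * sinh t' * c.
Proof.
  intros Ht Ht' Hc; rewrite cosh_mul_sub_sinh_mul.
  pose proof (sinh_nonneg t Ht); pose proof (sinh_nonneg t' Ht').
  assert (0 <= sinh t * sinh t') by nra; nra.
Qed.

Section ConeDistance.
Variables (Z : Type) (d : Z -> Z -> R) (mu : R).

Lemma cone_dist_ge_gap z t z' t' :
  0 <= t -> 0 <= t' -> Rabs (t - t') - ln 2 <= cone_dist d mu z t z' t'.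
Proof.
  intros Ht Ht'; unfold cone_dist.
  pose proof (cosh_sub_le_cone_arg t t' (cos (mu * d z z')) Ht Ht' (proj2 (COS_bound _))).
  pose proof (cosh_ge_1 (t - t')).
  eapply Rle_trans; [|apply ln_le_acosh; lra].
  replace (Rabs (t - t') - ln 2) with (ln (exp (Rabs (t - t')) * / 2))
    by (rewrite ln_mult, ln_Rinv, ln_exp; [ring|lra|apply exp_pos|lra]).
  pose proof (exp_pos (Rabs (t - t'))); pose proof (exp_abs_le_2_cosh (t - t')).
  apply ln_le; lra.
Qed.

Lemma cone_dist_ge_sum r z t z' t' :
  0 < r < 1 -> 1 <= exp t * r -> 1 <= exp t' * r -> 0 < mu * d z z' <= PI ->
  t + t' + ln ((1 - r * r) * (1 - r * r) / 4 * ((mu * d z z') * (mu * d z z') / 18))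
    <= cone_dist d mu z t z' t'.
Proof.
  intros Hr Ht Ht' Hth; unfold cone_dist.
  set (th := mu * d z z') in *; set (c := cos th).
  pose proof (one_sub_cos_ge th ltac:(lra)) as Hc.
  assert (Ht0 : 0 <= t).
  { destruct (Rle_or_lt 0 t) as [|Hneg]; auto.
    pose proof (exp_increasing _ _ Hneg); rewrite exp_0 in *; nra. }
  assert (Ht0' : 0 <= t').
  { destruct (Rle_or_lt 0 t') as [|Hneg]; auto.
    pose proof (exp_increasing _ _ Hneg); rewrite exp_0 in *; nra. }
  pose proof (exp_mul_le_2_sinh t r Hr Ht); pose proof (exp_mul_le_2_sinh t' r Hr Ht').
  pose proof (exp_pos t); pose proof (exp_pos t').
  assert (Hrr : 0 < 1 - r * r) by nra.
  assert (Hth2 : 0 < th * th / 18) by nra.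
  set (K := (1 - r * r) * (1 - r * r) / 4 * (th * th / 18)).
  assert (HK : 0 < K) by (unfold K; apply Rmult_lt_0_compat; nra).
  assert (Hsinh : exp t * exp t' * K <= sinh t * sinh t' * (1 - c)).
  { assert (Hp : 0 < exp t * (1 - r * r) / 2) by (apply Rmult_lt_0_compat; nra).
    assert (Hp' : 0 < exp t' * (1 - r * r) / 2) by (apply Rmult_lt_0_compat; nra).
    assert (Hprod : exp t * (1 - r * r) / 2 * (exp t' * (1 - r * r) / 2) <= sinh t * sinh t')
      by (apply Rmult_le_compat; lra).
    replace (exp t * exp t' * K)
      with (exp t * (1 - r * r) / 2 * (exp t' * (1 - r * r) / 2) * (th * th / 18))
      by (unfold K; field).
    apply Rmult_le_compat; try lra; [apply Rmult_le_pos; lra|unfold c; lra]. }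
  rewrite cosh_mul_sub_sinh_mul in *; fold c in Hsinh |- *.
  pose proof (cosh_ge_1 (t - t')).
  assert (0 < exp t * exp t' * K)
    by (apply Rmult_lt_0_compat; [apply Rmult_lt_0_compat|]; assumption).
  eapply Rle_trans; [|apply ln_le_acosh; lra].
  replace (t + t' + ln K) with (ln (exp t * exp t' * K)).
  2:{ rewrite !ln_mult, !ln_exp; [ring|lra|lra|apply Rmult_lt_0_compat; lra|exact HK]. }
  apply ln_le; lra.
Qed.

End ConeDistance.

Lemma pow_le_pow_of_le r m j : 0 < r < 1 -> (m <= j)%nat -> r ^ j <= r ^ m.
Proof.
  intros Hr Hmj; replace j with (m + (j - m))%nat by lia; rewrite pow_add.
  pose proof (pow_lt r m ltac:(lra)).
  assert (r ^ (j - m) <= 1) by (rewrite <- (pow1 (j - m)); apply pow_incr; lra).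
  pose proof (pow_le r (j - m) ltac:(lra)); nra.
Qed.

Section LevelEstimates.
Variables (Z : Type) (d : Z -> Z -> R) (D r : R).
Hypothesis Hr : 0 < r < 1.

Let step := ln (1 / r).

Lemma step_pos : 0 < step.
Proof.
  unfold step; rewrite <- ln_1; apply ln_increasing; [lra|].
  apply (Rmult_lt_reg_r r); [lra|]; field_simplify; lra.
Qed.

Lemma ln_pow_r j : ln (r ^ j) = - (INR j * step).
Proof.
  unfold step; rewrite ln_pow by lra; unfold Rdiv; rewrite Rmult_1_l, ln_Rinv by lra; ring.
Qed.

Lemma level_exp_ge j : (1 <= j)%nat -> 1 <= exp (INR j * step) * r.
Proof.
  intro Hj; unfold step; rewrite <- ln_pow by (apply Rdiv_lt_0_compat; lra).
  rewrite exp_ln by (apply pow_lt, Rdiv_lt_0_compat; lra).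
  replace j with (S (j - 1)) by lia; rewrite <- tech_pow_Rmult.
  replace (1 / r * (1 / r) ^ (j - 1) * r) with ((1 / r) ^ (j - 1)) by (field; lra).
  apply pow_R1_Rle; apply (Rmult_le_reg_r r); [lra|]; field_simplify; lra.
Qed.

Lemma ln_le_of_scaled_pow c T Y : 0 < c -> c * r ^ T <= Y -> ln c - INR T * step <= ln Y.
Proof.
  intros Hc HY; pose proof (pow_lt r T ltac:(lra)).
  unfold Rminus; rewrite <- ln_pow_r, <- ln_mult by lra; apply ln_le; [nra|lra].
Qed.

Lemma exists_scaled_pow_le c Y : 0 < c -> 0 < Y -> exists n, c * r ^ n <= Y.
Proof.
  intros Hc HY.
  destruct (pow_lt_1_zero r ltac:(rewrite Rabs_right; lra) (Y / c)
              ltac:(apply Rdiv_lt_0_compat; lra)) as [n Hn].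
  exists n; specialize (Hn n (le_n _)); rewrite Rabs_right in Hn by (left; apply pow_lt; lra).
  apply (Rmult_lt_compat_l c) in Hn; auto.
  replace (c * (Y / c)) with Y in Hn by (field; lra); lra.
Qed.

Lemma X_dist_ge_level_gap z j z' j' :
  INR ((j - j') + (j' - j)) * step <= X_dist d D r z j z' j' + ln 2.
Proof.
  unfold X_dist; fold step; pose proof step_pos.
  pose proof (cone_dist_ge_gap Z d (PI / D) z (INR j * step) z' (INR j' * step)) as Hgap.
  assert (INR ((j - j') + (j' - j)) * step = Rabs (INR j * step - INR j' * step)); [|
    pose proof (pos_INR j); pose proof (pos_INR j'); pose proof (Hgap ltac:(nra) ltac:(nra));
    lra].
  rewrite plus_INR; destruct (le_lt_dec j j').
  - replace (j - j')%nat with 0%nat by lia; rewrite minus_INR by lia.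
    rewrite Rabs_left1; [simpl; ring|]. pose proof (le_INR _ _ l); nra.
  - replace (j' - j)%nat with 0%nat by lia; rewrite minus_INR by lia.
    rewrite Rabs_right; [simpl; ring|]. pose proof (lt_INR _ _ l); nra.
Qed.

Variables (gamma lam : R).
Hypotheses (Hgamma : 0 < gamma) (Hlam : 0 <= lam) (HD : 0 < D).

Definition cone_const : R := (1 - r * r) * (1 - r * r) / 4 * ((PI / D) * (PI / D) / 18).

Definition branch_const : R :=
  3 * ln 2 + 2 * Rabs (ln gamma) + 2 * Rabs (ln (4 * (lam + 1))) + Rabs (ln cone_const).

Lemma ln2_pos : 0 < ln 2.
Proof. rewrite <- ln_1; apply ln_increasing; lra. Qed.

Lemma ln2_le_branch_const : ln 2 <= branch_const.
Proof.
  unfold branch_const; pose proof (Rabs_pos (ln gamma)).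
  pose proof (Rabs_pos (ln (4 * (lam + 1)))); pose proof (Rabs_pos (ln cone_const)).
  pose proof ln2_pos; lra.
Qed.

Lemma X_dist_ge_level_sum z j z' j' :
  (1 <= j)%nat -> (1 <= j')%nat -> 0 < d z z' <= D ->
  (INR j + INR j') * step + ln cone_const + 2 * ln (d z z') <= X_dist d D r z j z' j'.
Proof.
  intros Hj Hj' Hzz'; unfold X_dist; fold step.
  assert (Hth : 0 < PI / D * d z z' <= PI).
  { pose proof PI_RGT_0; split; [apply Rmult_lt_0_compat; [apply Rdiv_lt_0_compat|]; lra|].
    replace PI with (PI / D * D) at 2 by (field; lra).
    apply Rmult_le_compat_l; [left; apply Rdiv_lt_0_compat|]; lra. }
  eapply Rle_trans; [|apply (cone_dist_ge_sum Z d (PI / D) r); auto; apply level_exp_ge; auto].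
  assert (Hc : 0 < cone_const).
  { unfold cone_const; pose proof PI_RGT_0.
    assert (0 < PI / D) by (apply Rdiv_lt_0_compat; lra).
    assert (0 < 1 - r * r) by nra.
    apply Rmult_lt_0_compat; [|nra]; apply Rmult_lt_0_compat; nra. }
  replace ((1 - r * r) * (1 - r * r) / 4 * (PI / D * d z z' * (PI / D * d z z') / 18))
    with (cone_const * (d z z' * d z z')) by (unfold cone_const; field; lra).
  assert (0 < d z z') by lra; assert (0 < d z z' * d z z') by nra.
  rewrite !ln_mult by assumption; lra.
Qed.

Lemma pow_exponent_gap_le c K T m :
  0 < c -> 0 < K -> c * r ^ T <= K * r ^ m -> (INR m - INR T) * step <= ln K - ln c.
Proof.
  intros Hc HK Hle; pose proof (pow_lt r m ltac:(lra)).
  pose proof (ln_le_of_scaled_pow c T _ Hc Hle).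
  rewrite ln_mult, ln_pow_r in * by lra; lra.
Qed.

Lemma X_dist_ge_levels_sub_branch z j z' j' T :
  (1 <= j)%nat -> (1 <= j')%nat -> 0 <= d z z' <= D ->
  gamma * r ^ T <= (lam + 1) * (r ^ j + r ^ j') + d z z' ->
  (INR j + INR j' - 2 * INR T) * step <= X_dist d D r z j z' j' + branch_const.
Proof.
  intros Hj Hj' Hzz' HT.
  set (m := Nat.min j j').
  pose proof (Rabs_pos (ln cone_const)); pose proof (Rle_abs (ln (4 * (lam + 1)))).
  pose proof (Rabs_pos (ln (4 * (lam + 1)))).
  pose proof (Rle_abs (- ln gamma)); rewrite Rabs_Ropp in *.
  pose proof ln2_pos; pose proof step_pos.
  assert (Hgap : (INR j + INR j' - 2 * INR m) * step <= X_dist d D r z j z' j' + ln 2).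
  { pose proof (X_dist_ge_level_gap z j z' j'); unfold m.
    destruct (Nat.le_ge_cases j j').
    - rewrite Nat.min_l by lia.
      replace (j - j')%nat with 0%nat in * by lia.
      rewrite plus_INR, minus_INR in * by lia; simpl INR in *; lra.
    - rewrite Nat.min_r by lia.
      replace (j' - j)%nat with 0%nat in * by lia.
      rewrite plus_INR, minus_INR in * by lia; simpl INR in *; lra. }
  assert (Hrm : r ^ j + r ^ j' <= 2 * r ^ m)
    by (pose proof (pow_le_pow_of_le r m j Hr ltac:(lia));
        pose proof (pow_le_pow_of_le r m j' Hr ltac:(lia)); lra).
  pose proof (pow_lt r m ltac:(lra)).
  destruct (Rle_or_lt (d z z') (2 * (lam + 1) * r ^ m)) as [Hnear|Hfar].
  - assert (Hdepth : (INR m - INR T) * step <= ln (4 * (lam + 1)) - ln gamma)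
      by (apply pow_exponent_gap_le; nra).
    unfold branch_const; nra.
  - assert (Hrho : 0 < d z z') by nra.
    assert (Hdepth : ln gamma - INR T * step <= ln (2 * d z z'))
      by (apply ln_le_of_scaled_pow; nra).
    rewrite ln_mult in Hdepth by lra.
    pose proof (X_dist_ge_level_sum z j z' j' Hj Hj' ltac:(lra)).
    pose proof (Rle_abs (- ln cone_const)); rewrite Rabs_Ropp in *.
    replace ((INR j + INR j' - 2 * INR T) * step)
      with ((INR j + INR j') * step - 2 * (INR T * step)) by ring.
    unfold branch_const; lra.
Qed.

Lemma X_dist_ge_branch_depth z j z' j' T :
  (1 <= j)%nat -> (1 <= j')%nat -> 0 <= d z z' <= D ->
  gamma * r ^ T <= (lam + 1) * (r ^ j + r ^ j') + d z z' ->
  INR ((j - T) + (j' - T)) * step <= X_dist d D r z j z' j' + branch_const.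
Proof.
  intros Hj Hj' Hzz' HT; pose proof ln2_le_branch_const.
  destruct (le_lt_dec T j), (le_lt_dec T j').
  1: rewrite plus_INR, !minus_INR by lia;
     pose proof (X_dist_ge_levels_sub_branch z j z' j' T Hj Hj' Hzz' HT); lra.
  all: assert (Hgap : ((j - T) + (j' - T) <= (j - j') + (j' - j))%nat) by lia.
  all: apply le_INR in Hgap; pose proof (X_dist_ge_level_gap z j z' j'); pose proof step_pos.
  all: nra.
Qed.

End LevelEstimates.

Lemma roughly_lipschitz_of_level_bounds (Z A : Type) (d : Z -> Z -> R) (D r : R)
  (cov : A -> nat -> (Z -> Prop) -> Prop) (choice : A -> nat -> Z -> (Z -> Prop))
  (a : A) (C : nat) (Q : R) :
  0 < r < 1 -> 0 <= Q ->
  (forall z j z' j', exists N k,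
     tree_walk Z A cov a (f_vertex choice a z j) (f_vertex choice a z' j') N /\
     (N <= C + k)%nat /\ INR k * ln (1 / r) <= X_dist d D r z j z' j' + Q) ->
  exists Lam sigma, 0 < Lam /\ 0 <= sigma /\
    forall z j z' j', exists m,
      tree_walk Z A cov a (f_vertex choice a z j) (f_vertex choice a z' j') m /\
      INR m <= Lam * X_dist d D r z j z' j' + sigma.
Proof.
  intros Hr HQ Hbound; pose proof (step_pos r Hr).
  exists (/ ln (1 / r)), (INR C + Q / ln (1 / r)).
  split; [apply Rinv_0_lt_compat; lra|].
  split.
  { pose proof (pos_INR C).
    assert (0 <= Q / ln (1 / r)) by (apply Rmult_le_pos; [|left; apply Rinv_0_lt_compat]; lra).
    lra. }
  intros z j z' j'; destruct (Hbound z j z' j') as [N [k [Hwalk [HN Hk]]]].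
  exists N; split; [exact Hwalk|].
  apply le_INR in HN; rewrite plus_INR in HN.
  assert (INR k <= (X_dist d D r z j z' j' + Q) / ln (1 / r)); [|unfold Rdiv in *; nra].
  apply (Rmult_le_reg_r (ln (1 / r))); [lra|]; unfold Rdiv.
  rewrite Rmult_assoc, Rinv_l by lra; lra.
Qed.

(** * Walks in the trees [T_a] *)

Lemma exists_greatest_between (P : nat -> Prop) k m : (k <= m)%nat -> P k ->
  exists l, (k <= l <= m)%nat /\ P l /\ forall l', (l < l' <= m)%nat -> ~ P l'.
Proof.
  induction m as [|m IH]; intros Hkm Pk.
  - exists 0%nat; replace k with 0%nat in * by lia; split; [lia|split; auto]; lia.
  - destruct (classic (P (S m))) as [HP|HP].
    + exists (S m); split; [lia|split; auto]; lia.
    + destruct (le_lt_dec k m) as [Hk|Hk].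
      * destruct (IH Hk Pk) as [l [Hl [Pl Hgt]]]; exists l; split; [lia|split; auto].
        intros l' Hl'; destruct (Nat.eq_dec l' (S m)) as [->|]; auto; apply Hgt; lia.
      * exists k; split; [lia|split; auto]; lia.
Qed.

Section Tree.
Variables (Z A : Type) (d : Z -> Z -> R) (cov : A -> nat -> (Z -> Prop) -> Prop)
  (r delta lam gamma : R) (a : A).
Hypotheses (Hmet : is_metric Z d) (Hcs : characteristic_sequence Z d A cov r delta lam gamma)
  (Hr : 0 < r < 1) (Hgamma : 0 < gamma) (Hlam : 0 <= lam).

Notation member := (fam Z A cov a).
Notation adjacent := (adj Z A cov a).

Inductive walk : vertex Z -> vertex Z -> nat -> Prop :=
| walk_nil v : walk v v 0
| walk_cons v u w n : adjacent v u -> walk u w n -> walk v w (S n).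

Lemma walk_tree_walk v w n : walk v w n -> tree_walk Z A cov a v w n.
Proof.
  induction 1; [apply tw0; split; [reflexivity|intro; tauto]|eapply twS; eauto].
Qed.

Lemma walk_app u v w n m : walk u v n -> walk v w m -> walk u w (n + m).
Proof. induction 1; intros; simpl; auto; eapply walk_cons; eauto. Qed.

Lemma walk_rev v w n : walk v w n -> walk w v n.
Proof.
  induction 1 as [|v u w n Hvu _ IH]; [apply walk_nil|].
  replace (S n) with (n + 1)%nat by lia; eapply walk_app; [exact IH|].
  apply (walk_cons _ v); [unfold adj in *; tauto|apply walk_nil].
Qed.

Lemma walk_child v w : child Z A cov a v w -> walk v w 1.
Proof. intro H; apply (walk_cons _ w); [left; exact H|apply walk_nil]. Qed.

Lemma dist_self z : d z z = 0.
Proof. apply (proj1 Hmet); reflexivity. Qed.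

Lemma dist_sym x y : d x y = d y x.
Proof. apply (proj1 (proj2 Hmet)). Qed.

Lemma dist_triangle x y w : d x w <= d x y + d y w.
Proof. apply (proj2 (proj2 Hmet)). Qed.

Lemma dist_nonneg x y : 0 <= d x y.
Proof. pose proof (dist_triangle x y x); rewrite dist_self, (dist_sym y x) in *; lra. Qed.

Lemma separation_pos l : 0 < gamma * r ^ l.
Proof. apply Rmult_lt_0_compat; auto; apply pow_lt; lra. Qed.

Lemma nbhd_self l U z : U z -> nbhd Z d (gamma * r ^ l) U z.
Proof. exists z; split; auto; rewrite dist_self; apply separation_pos. Qed.

Lemma member_cov l U : (1 <= l)%nat -> member l U <-> cov a l U.
Proof. destruct l; simpl; [lia|tauto]. Qed.

Lemma member_same_set l U V :
  member l U -> member l V -> (exists z, U z /\ V z) -> same_set Z U V.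
Proof.
  destruct l as [|l]; simpl.
  - intros HU HV _ z; split; auto.
  - apply (proj2 ((proj1 Hcs) a (S l) ltac:(lia))).
Qed.

Lemma member_meet_subset l k C W : (k < l)%nat -> member l C -> member k W ->
  (exists z, C z /\ W z) -> subset Z C W.
Proof.
  intros Hkl HC HW [b [Cb Wb]]; destruct k as [|k]; [intros z _; apply HW|].
  rewrite member_cov in HC, HW by lia.
  destruct (classic (same_set Z C W)) as [Hs|Hs]; [intros z; apply Hs|].
  destruct (proj1 (proj2 (proj2 (proj2 (proj2 Hcs)))) a l (S k) C W
              ltac:(lia) ltac:(lia) HC HW Hs) as [Hdisj|Hsub].
  - exfalso; apply (Hdisj b); split; auto; apply nbhd_self; auto.
  - intros z Hz; apply Hsub, nbhd_self; auto.
Qed.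

Definition ancestor_level (B : Z -> Prop) (l : nat) : Prop :=
  exists C, member l C /\ subset Z B C.

(* Each step goes to the deepest proper ancestor.  The last hypothesis says that at most
   one ancestor level of [B] strictly between [k] and [m] is smaller than [T]. *)
Lemma walk_up m B k W T :
  (k < m)%nat -> member m B -> (exists b, B b) -> member k W -> subset Z B W ->
  (forall l1 l2, (k < l2 < l1)%nat -> (l1 < m)%nat ->
     ancestor_level B l1 -> ancestor_level B l2 -> (T <= l1)%nat) ->
  exists N, walk (m, B) (k, W) N /\ (N <= m - k)%nat /\ (N <= m - T + 2)%nat.
Proof.
  revert B k W; induction m as [m IH] using (well_founded_induction lt_wf).
  intros B k W Hkm HB [b Bb] HW HBW Hsparse.
  destruct (exists_greatest_between (ancestor_level B) k (m - 1) ltac:(lia)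
              (ex_intro _ W (conj HW HBW))) as [l [Hl [[C [HC HBC]] Hgt]]].
  assert (Hchild : forall l' X, (l <= l' < m)%nat -> member l' X -> subset Z B X ->
                     child Z A cov a (m, B) (l', X)).
  { intros l' X Hl' HX HBX; simpl; repeat split; auto; try lia.
    intros l'' H1 H2 Hanc; apply (Hgt l''); [lia|exact Hanc]. }
  destruct (Nat.eq_dec l k) as [->|Hlk].
  { exists 1%nat; split; [apply walk_child, Hchild; auto; lia|lia]. }
  assert (HCW : subset Z C W) by (apply (member_meet_subset l k); auto; try lia; eauto).
  destruct (le_lt_dec T l) as [HTl|HlT].
  - destruct (IH l ltac:(lia) C k W ltac:(lia) HC (ex_intro _ b (HBC b Bb)) HW HCW)
      as [N [Hwalk HN]].
    { intros l1 l2 H12 Hl1 [C1 [HC1 HCC1]] [C2 [HC2 HCC2]]; apply (Hsparse l1 l2); try lia.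
      - exists C1; split; auto; intros z Hz; auto.
      - exists C2; split; auto; intros z Hz; auto. }
    exists (S N); split; [apply (walk_cons _ (l, C)); [left; apply Hchild; auto; lia|]|];
      auto; lia.
  - exists 2%nat; split; [|lia].
    apply (walk_app _ (l, C) _ 1 1); apply walk_child; [apply Hchild; auto; lia|].
    simpl; repeat split; auto; try lia.
    intros k' H1 H2 [X [HX HCX]].
    assert (T <= l)%nat; [|lia].
    apply (Hsparse l k'); try lia; [exists C; auto|exists X; split; auto; intros z Hz; auto].
Qed.

Lemma diam_member j U u v : (1 <= j)%nat -> member j U -> U u -> U v -> d u v <= r ^ j.
Proof.
  intros Hj HU Hu Hv; apply member_cov in HU; auto.
  apply (proj1 (proj2 Hcs) j a U); auto.
Qed.

Definition common_ancestor_level (U U' : Z -> Prop) (l : nat) : Prop :=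
  exists W, member l W /\ subset Z U W /\ subset Z U' W.

Section NonemptyMembers.
Hypothesis Hnonempty : forall l E, (1 <= l)%nat -> cov a l E -> exists z, E z.

Lemma nbhd_subset_of_subset l k C W : (1 <= k)%nat -> (k < l)%nat ->
  member l C -> member k W -> subset Z C W -> (exists c, C c) ->
  subset Z (nbhd Z d (gamma * r ^ l) C) W.
Proof.
  intros Hk Hkl HC HW HCW [c Cc]; rewrite member_cov in HC, HW by lia.
  destruct (classic (same_set Z C W)) as [Hs|Hs].
  - destruct (proj2 (proj2 (proj2 (proj2 (proj2 Hcs)))) a l k W Hk Hkl HW) as [C' [HC' Hsub]].
    destruct (Hnonempty l C' ltac:(lia) HC') as [u Hu].
    assert (HsC : same_set Z C' C).
    { apply (member_same_set l); try apply member_cov; auto; try lia.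
      exists u; split; auto; apply Hs, Hsub, nbhd_self; auto. }
    intros z [c' [Hc' Hd]]; apply Hsub; exists c'; split; auto; apply HsC; auto.
  - destruct (proj1 (proj2 (proj2 (proj2 (proj2 Hcs)))) a l k C W
                ltac:(lia) ltac:(lia) HC HW Hs) as [Hdisj|Hsub]; auto.
    exfalso; apply (Hdisj c); split; [apply nbhd_self|]; auto.
Qed.

Section Branching.
Variables (z z' : Z) (j j' k : nat) (U U' : Z -> Prop).
Hypotheses (Hkj : (k < j)%nat) (Hkj' : (k < j')%nat)
  (HU : member j U) (HU' : member j' U')
  (HzU : dist_le Z d z U (lam * r ^ j)) (HzU' : dist_le Z d z' U' (lam * r ^ j'))
  (Hgreatest : forall l, (k < l)%nat -> (l <= j)%nat -> (l <= j')%nat ->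
                 ~ common_ancestor_level U U' l).

Lemma exists_point_outside_ancestor l C :
  (k < l < j)%nat -> member l C -> subset Z U C -> exists y, U' y /\ ~ C y.
Proof.
  intros Hl HC HUC.
  apply NNPP; intro Hall.
  assert (HU'C : subset Z U' C) by (intros y Hy; apply NNPP; intro; apply Hall; eauto).
  destruct (HzU' 1 ltac:(lra)) as [u' [Hu' _]].
  destruct (le_lt_dec l j') as [Hlj'|Hj'l].
  - apply (Hgreatest l); try lia; exists C; auto.
  - apply (Hgreatest j'); try lia; exists U'; split; auto; split; [|intros y; auto].
    intros y Hy; apply (member_meet_subset l j' C U'); eauto.
Qed.

Lemma ancestor_levels_sparse T :
  (forall l, gamma * r ^ l <= (lam + 1) * (r ^ j + r ^ j') + d z z' -> (T <= l)%nat) ->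
  forall l1 l2, (k < l2 < l1)%nat -> (l1 < j)%nat ->
    ancestor_level U l1 -> ancestor_level U l2 -> (T <= l1)%nat.
Proof.
  intros HT l1 l2 Hl Hl1 [C1 [HC1 HUC1]] [C2 [HC2 HUC2]].
  destruct (HzU 1 ltac:(lra)) as [u0 [Hu0 _]].
  destruct (exists_point_outside_ancestor l2 C2 ltac:(lia) HC2 HUC2) as [y [Hy HnotC2]].
  assert (Hfar : forall c, C1 c -> gamma * r ^ l1 <= d y c).
  { intros c Hc; destruct (Rle_or_lt (gamma * r ^ l1) (d y c)) as [|Hlt]; auto.
    exfalso; apply HnotC2; refine (nbhd_subset_of_subset l1 l2 C1 C2 _ _ _ _ _ _ y _);
      try lia; auto.
    - apply (member_meet_subset l1 l2); try lia; auto; exists u0; auto.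
    - exists u0; auto.
    - exists c; split; auto; rewrite dist_sym; auto. }
  apply HT; apply Rle_plus_epsilon; intros e He.
  destruct (HzU (e / 2) ltac:(lra)) as [u [Hu Hzu]].
  destruct (HzU' (e / 2) ltac:(lra)) as [u' [Hu' Hzu']].
  pose proof (Hfar u (HUC1 u Hu)); pose proof (diam_member j' U' y u' ltac:(lia) HU' Hy Hu').
  pose proof (dist_triangle y u' u); pose proof (dist_triangle u' z' u);
    pose proof (dist_triangle z' z u).
  rewrite (dist_sym u' z'), (dist_sym z' z) in *.
  pose proof (pow_lt r j ltac:(lra)); nra.
Qed.

End Branching.

Lemma walk_via_common_ancestor z z' j j' k U U' W :
  (k < j)%nat -> (k < j')%nat -> member j U -> member j' U' ->
  dist_le Z d z U (lam * r ^ j) -> dist_le Z d z' U' (lam * r ^ j') ->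
  (forall l, (k < l)%nat -> (l <= j)%nat -> (l <= j')%nat -> ~ common_ancestor_level U U' l) ->
  member k W -> subset Z U W -> subset Z U' W ->
  exists N T, walk (j, U) (j', U') N /\
    gamma * r ^ T <= (lam + 1) * (r ^ j + r ^ j') + d z z' /\
    (N <= 4 + ((j - T) + (j' - T)))%nat.
Proof.
  intros Hkj Hkj' HU HU' HzU HzU' Hgreatest HW HUW HU'W.
  destruct (HzU 1 ltac:(lra)) as [u0 [Hu0 _]]; destruct (HzU' 1 ltac:(lra)) as [u0' [Hu0' _]].
  pose proof (pow_lt r j ltac:(lra)); pose proof (pow_lt r j' ltac:(lra)).
  pose proof (dist_nonneg z z').
  destruct (exists_scaled_pow_le r Hr gamma ((lam + 1) * (r ^ j + r ^ j') + d z z')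
              Hgamma ltac:(nra)) as [n Hn].
  destruct (dec_inh_nat_subset_has_unique_least_element
              (fun l => gamma * r ^ l <= (lam + 1) * (r ^ j + r ^ j') + d z z')
              (fun l => classic _) (ex_intro _ n Hn)) as [T [[HT Hmin] _]].
  destruct (walk_up j U k W T Hkj HU (ex_intro _ u0 Hu0) HW HUW) as [N1 [Hwalk1 [_ HN1]]].
  { apply (ancestor_levels_sparse z z' j j' k U U'); auto. }
  destruct (walk_up j' U' k W T Hkj' HU' (ex_intro _ u0' Hu0') HW HU'W)
    as [N2 [Hwalk2 [_ HN2]]].
  { apply (ancestor_levels_sparse z' z j' j k U' U); auto.
    - intros l Hl1 Hl2 Hl3 [X [HX [HUX HU'X]]]; apply (Hgreatest l); auto; exists X; auto.
    - intros l Hl; apply Hmin; rewrite dist_sym; lra. }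
  exists (N1 + N2)%nat, T; split; [|split; [exact HT|lia]].
  eapply walk_app; [exact Hwalk1|apply walk_rev; exact Hwalk2].
Qed.


Lemma walk_up_to_member m B k W : (k < m)%nat -> member m B -> (exists b, B b) ->
  member k W -> subset Z B W -> exists N, walk (m, B) (k, W) N /\ (N <= m - k)%nat.
Proof.
  intros Hkm HB HBne HW HBW.
  destruct (walk_up m B k W 0 Hkm HB HBne HW HBW) as [N [Hwalk [HN _]]]; [intros; lia|].
  exists N; auto.
Qed.

Lemma walk_between_near_members z z' j j' U U' :
  member j U -> member j' U' ->
  dist_le Z d z U (lam * r ^ j) -> dist_le Z d z' U' (lam * r ^ j') ->
  exists N, tree_walk Z A cov a (j, U) (j', U') N /\
    ((N <= (j - j') + (j' - j))%nat \/
     (1 <= j)%nat /\ (1 <= j')%nat /\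
     exists T, gamma * r ^ T <= (lam + 1) * (r ^ j + r ^ j') + d z z' /\
       (N <= 4 + ((j - T) + (j' - T)))%nat).
Proof.
  intros HU HU' HzU HzU'.
  destruct (HzU 1 ltac:(lra)) as [u0 [Hu0 _]]; destruct (HzU' 1 ltac:(lra)) as [u0' [Hu0' _]].
  assert (Hroot : common_ancestor_level U U' 0)
    by (exists (fun _ => True); simpl; repeat split; auto; intros y _; exact I).
  destruct (exists_greatest_between (common_ancestor_level U U') 0 (Nat.min j j') ltac:(lia)
              Hroot) as [k [Hk [[W [HW [HUW HU'W]]] Hgt]]].
  destruct (Nat.eq_dec k j) as [->|Hkj]; [|destruct (Nat.eq_dec k j') as [->|Hkj']].
  - assert (HWU : same_set Z W U) by (apply (member_same_set j); eauto).
    destruct (Nat.eq_dec j j') as [<-|Hjj'].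
    + exists 0%nat; split; [|left; lia].
      apply tw0; split; [reflexivity|].
      apply (member_same_set j); auto; exists u0'; split; [apply HWU, HU'W|]; auto.
    + destruct (walk_up_to_member j' U' j U ltac:(lia) HU' (ex_intro _ u0' Hu0') HU)
        as [N [Hwalk HN]]; [intros y Hy; apply HWU; auto|].
      exists N; split; [apply walk_tree_walk, walk_rev; auto|left; lia].
  - assert (HWU' : same_set Z W U') by (apply (member_same_set j'); eauto).
    destruct (walk_up_to_member j U j' U' ltac:(lia) HU (ex_intro _ u0 Hu0) HU')
      as [N [Hwalk HN]]; [intros y Hy; apply HWU'; auto|].
    exists N; split; [apply walk_tree_walk; auto|left; lia].
  - destruct (walk_via_common_ancestor z z' j j' k U U' W ltac:(lia) ltac:(lia) HU HU' HzU HzU'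
                ltac:(intros l Hl1 Hl2 Hl3; apply Hgt; lia) HW HUW HU'W)
      as [N [T [Hwalk [HT HN]]]].
    exists N; split; [apply walk_tree_walk; auto|right; split; [|split]; [lia|lia|eauto]].
Qed.

End NonemptyMembers.

Section EmptyMember.
Variables (L0 : nat) (E0 : Z -> Prop).
Hypotheses (HL0 : (1 <= L0)%nat) (HE0 : cov a L0 E0) (HE0empty : forall z, ~ E0 z).

Lemma empty_member_below l : (L0 < l)%nat -> exists E, member l E /\ forall z, ~ E z.
Proof.
  intro Hl.
  destruct (proj2 (proj2 (proj2 (proj2 (proj2 Hcs)))) a l L0 E0 HL0 Hl HE0) as [E [HE Hsub]].
  exists E; split; [apply member_cov; auto; lia|].
  intros z Hz; apply (HE0empty z), Hsub, nbhd_self; auto.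
Qed.

Lemma walk_down (z0 : Z) i h V : (i <= h)%nat -> member i V ->
  exists V', member h V' /\ walk (h, V') (i, V) (h - i).
Proof.
  intros Hih HV; induction h as [|h IH].
  - replace i with 0%nat in * by lia; exists V; split; [exact HV|apply walk_nil].
  - destruct (Nat.eq_dec i (S h)) as [->|Hne].
    { exists V; split; auto; rewrite Nat.sub_diag; apply walk_nil. }
    destruct (IH ltac:(lia)) as [V1 [HV1 Hwalk]].
    assert (Hdeeper : exists V', member (S h) V' /\ subset Z V' V1).
    { destruct h as [|h].
      - destruct (proj1 (proj2 (proj2 (proj2 Hcs))) a 1%nat z0 (le_n _)) as [V' [HV' _]].
        exists V'; split; auto; intros y _; apply HV1.
      - destruct (proj2 (proj2 (proj2 (proj2 (proj2 Hcs)))) a (S (S h)) (S h) V1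
                    ltac:(lia) ltac:(lia) HV1) as [V' [HV' Hsub]].
        exists V'; split; auto; intros y Hy; apply Hsub, nbhd_self; auto. }
    destruct Hdeeper as [V' [HV' HV'V1]].
    exists V'; split; auto; replace (S h - i)%nat with (S (h - i)) by lia.
    apply (walk_cons _ (h, V1)); auto; left; simpl; repeat split; auto; lia.
Qed.

Lemma walk_via_empty_member (z0 : Z) j U j' U' : member j U -> member j' U' ->
  exists N, walk (j, U) (j', U') N /\ (N <= 2 * L0 + 2 + ((j - j') + (j' - j)))%nat.
Proof.
  intros HU HU'; set (h := Nat.max (Nat.max j j') L0).
  destruct (walk_down z0 j h U ltac:(lia) HU) as [V [HV Hwalk]].
  destruct (walk_down z0 j' h U' ltac:(lia) HU') as [V' [HV' Hwalk']].
  destruct (empty_member_below (S h) ltac:(lia)) as [E [HE Hempty]].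
  assert (Hchild : forall X, member h X -> walk (S h, E) (h, X) 1).
  { intros X HX; apply walk_child; simpl; repeat split; auto; try lia.
    intros y Hy; exfalso; apply (Hempty y Hy). }
  exists ((h - j) + 1 + 1 + (h - j'))%nat; split; [|lia].
  repeat eapply walk_app; [apply walk_rev, Hwalk|apply walk_rev, Hchild, HV|
                           apply Hchild, HV'|exact Hwalk'].
Qed.

End EmptyMember.

Variable choice : A -> nat -> Z -> (Z -> Prop).
Hypothesis Hchoice : forall a j z, (1 <= j)%nat ->
  cov a j (choice a j z) /\ forall U, cov a j U -> dist_le_dist Z d z (choice a j z) U.

Lemma f_vertex_near z j :
  exists U, f_vertex choice a z j = (j, U) /\ member j U /\ dist_le Z d z U (lam * r ^ j).
Proof.
  destruct j as [|j].
  - exists (fun _ => True); split; [reflexivity|split; [intros y; exact I|]].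
    intros e He; exists z; split; [exact I|]; rewrite dist_self; simpl; lra.
  - exists (choice a (S j) z); split; [reflexivity|].
    destruct (Hchoice a (S j) z ltac:(lia)) as [Hcov Hclosest]; split; [exact Hcov|].
    intros e He.
    destruct (proj1 (proj2 (proj2 (proj2 Hcs))) a (S j) z ltac:(lia)) as [V [HV HzV]].
    destruct (HzV (e / 2) ltac:(lra)) as [v [Hv Hzv]].
    destruct (Hclosest V HV v Hv (e / 2) ltac:(lra)) as [u [Hu Hzu]].
    exists u; split; auto; lra.
Qed.

Variable D : R.
Hypotheses (HD : 0 < D) (Hdiam : forall x y, d x y <= D).

Lemma level_bounds_of_empty_member L0 E0 :
  (1 <= L0)%nat -> cov a L0 E0 -> (forall z, ~ E0 z) ->
  forall z j z' j', exists N k,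
    tree_walk Z A cov a (f_vertex choice a z j) (f_vertex choice a z' j') N /\
    (N <= 2 * L0 + 2 + k)%nat /\ INR k * ln (1 / r) <= X_dist d D r z j z' j' + ln 2.
Proof.
  intros HL0 HE0 Hempty z j z' j'.
  destruct (f_vertex_near z j) as [U [-> [HU _]]].
  destruct (f_vertex_near z' j') as [U' [-> [HU' _]]].
  destruct (walk_via_empty_member L0 E0 HL0 HE0 Hempty z j U j' U' HU HU') as [N [Hwalk HN]].
  exists N, ((j - j') + (j' - j))%nat; split; [apply walk_tree_walk; auto|split; auto].
  apply X_dist_ge_level_gap; auto.
Qed.

Lemma level_bounds_of_nonempty_members :
  (forall l E, (1 <= l)%nat -> cov a l E -> exists z, E z) ->
  forall z j z' j', exists N k,
    tree_walk Z A cov a (f_vertex choice a z j) (f_vertex choice a z' j') N /\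
    (N <= 4 + k)%nat /\
    INR k * ln (1 / r) <= X_dist d D r z j z' j' + branch_const D r gamma lam.
Proof.
  intros Hnonempty z j z' j'.
  destruct (f_vertex_near z j) as [U [-> [HU HzU]]].
  destruct (f_vertex_near z' j') as [U' [-> [HU' HzU']]].
  destruct (walk_between_near_members Hnonempty z z' j j' U U' HU HU' HzU HzU')
    as [N [Hwalk [HN|[Hj [Hj' [T [HT HN]]]]]]].
  - exists N, ((j - j') + (j' - j))%nat; split; [exact Hwalk|split; [lia|]].
    pose proof (ln2_le_branch_const D r gamma lam).
    pose proof (X_dist_ge_level_gap Z d D r Hr z j z' j'); lra.
  - exists N, ((j - T) + (j' - T))%nat; split; [exact Hwalk|split; [lia|]].
    apply X_dist_ge_branch_depth; auto; split; [apply dist_nonneg|apply Hdiam].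
Qed.

End Tree.

Theorem proposition3p4
  (Z : Type) (d : Z -> Z -> R) (D : R)
  (A : Type) (elts : list A) (n : nat)
  (delta gamma lam r : R)
  (cov : A -> nat -> (Z -> Prop) -> Prop)
  (choice : A -> nat -> Z -> (Z -> Prop)) :
  is_metric Z d -> bounded_metric Z d -> is_diam Z d D -> 0 < D ->
  NoDup elts -> (forall a, In a elts) -> length elts = S n ->
  0 < delta < 1 -> 0 < gamma < 1 -> 1 <= lam -> 0 < r < 1 ->
  lam * r < delta -> r < D ->
  characteristic_sequence Z d A cov r delta lam gamma ->
  (* choice a j z is a member of U_j^a closest to z *)
  (forall a j z, (1 <= j)%nat ->
     cov a j (choice a j z) /\
     forall U, cov a j U -> dist_le_dist Z d z (choice a j z) U) ->
  forall a : A,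
    exists Lam sigma, 0 < Lam /\ 0 <= sigma /\
      forall (z : Z) (j : nat) (z' : Z) (j' : nat),
        exists m, tree_walk Z A cov a (f_vertex choice a z j) (f_vertex choice a z' j') m /\
          INR m <= Lam * X_dist d D r z j z' j' + sigma.
Proof.
  intros Hmet _ Hdiam HD _ _ _ _ Hgamma Hlam Hr _ _ Hcs Hchoice a.
  assert (HdD : forall x y, d x y <= D) by (intros x y; apply (proj1 Hdiam); eauto).
  destruct (classic (exists L0 E0, (1 <= L0)%nat /\ cov a L0 E0 /\ forall z, ~ E0 z))
    as [[L0 [E0 [HL0 [HE0 Hempty]]]]|Hnonempty].
  - apply (roughly_lipschitz_of_level_bounds Z A d D r cov choice a (2 * L0 + 2) (ln 2));
      [exact Hr|left; apply ln2_pos|].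
    eapply level_bounds_of_empty_member; eauto; lra.
  - assert (HQ : 0 <= branch_const D r gamma lam)
      by (pose proof ln2_pos; pose proof (ln2_le_branch_const D r gamma lam); lra).
    apply (roughly_lipschitz_of_level_bounds Z A d D r cov choice a 4
             (branch_const D r gamma lam)); [exact Hr|exact HQ|].
    eapply level_bounds_of_nonempty_members; eauto; try lra.
    intros l E Hl HE; apply NNPP; intro Hno; apply Hnonempty.
    exists l, E; repeat split; auto; intros z Hz; apply Hno; eauto.
Qed.
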